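(* Let $B_1,B_2\in\mathbb{B}_n$ be rational boxes in $\mathbb{R}^n$. Then $B_1\uplus B_2\neq B_1\cup B_2$ if and only if (1) there exists $i\in\{1,\dots,n\}$ such that $\pi_i(B_1)\oplus\pi_i(B_2)\neq\pi_i(B_1)\cup\pi_i(B_2)$; or (2) there exist $i,j\in\{1,\dots,n\}$ with $i\neq j$ such that $\pi_i(B_1)\not\subseteq\pi_i(B_2)$ and $\pi_j(B_2)\not\subseteq\pi_j(B_1)$.
   Context: A rational interval constraint on dimension $i$ is a constraint $x_i\bowtie b$ with $\bowtie\in\{<,\le,=,\ge,>\}$ and $b\in\mathbb{Q}$. A rational box is the set of points of $\mathbb{R}^n$ satisfying a finite system of rational interval constraints; $\mathbb{B}_n$ is the set of all rational boxes (including $\emptyset$). Equivalently, a non-empty rational box is a Cartesian product of $n$ non-empty, possibly unbounded, real intervals with rational, possibly open endpoints. Let $\mathbb{I}$ be the set of such intervals together with $\emptyset$, and for $I_1,I_2\in\mathbb{I}$ let $I_1\oplus I_2$ be the smallest element of $\mathbb{I}$ (w.r.t. inclusion) containing $I_1\cup I_2$. For $S\subseteq\mathbb{R}^n$, $\pi_i(S)=\{v_i : \mathbf{v}\in S\}$. $B_1\uplus B_2$ is the smallest rational box containing $B_1\cup B_2$; for non-empty boxes it equals $(\pi_1(B_1)\oplus\pi_1(B_2))\times\cdots\times(\pi_n(B_1)\oplus\pi_n(B_2))$. *)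

From Stdlib Require Import ClassicalEpsilon.
From mathcomp Require Import all_boot all_order all_algebra.
From mathcomp Require Import boolp classical_sets reals.
Set Implicit Arguments. Unset Strict Implicit. Unset Printing Implicit Defensive.
Import Order.TTheory GRing.Theory Num.Theory.
Local Open Scope ring_scope.
Local Open Scope classical_set_scope.

Inductive cmp := CLt | CLe | CEq | CGe | CGt.

Definition cmp_sat (R : realType) (c : cmp) (x b : R) : bool :=
  match c with
  | CLt => x < b | CLe => x <= b | CEq => x == b
  | CGe => x >= b | CGt => x > b
  end.

Record constr (n : nat) := Constr { c_dim : 'I_n; c_rel : cmp; c_bd : rat }.

(* points of R^n are row vectors; coordinate i of x is x ord0 i *)
Definition box_of (R : realType) (n : nat) (cs : seq (constr n)) : set 'rV[R]_n :=
  [set x | all (fun c => cmp_sat (c_rel c) (x ord0 (c_dim c)) (ratr (c_bd c))) cs].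

Definition is_rbox (R : realType) (n : nat) (B : set 'rV[R]_n) : Prop :=
  exists cs : seq (constr n), B = box_of cs.

(* I ∈ 𝕀 : the empty set or a non-empty, possibly unbounded interval with
   rational, possibly open endpoints = a set of reals given by finitely many
   constraints x ⋈ b, b rational *)
Definition is_rint (R : realType) (I : set R) : Prop :=
  exists cs : seq (cmp * rat),
    I = [set x | all (fun c => cmp_sat c.1 x (ratr c.2)) cs].

Definition is_smallest (T : Type) (P : set T -> Prop) (S A : set T) : Prop :=
  [/\ P A, S `<=` A & forall A', P A' -> S `<=` A' -> A `<=` A'].

Definition iplus (R : realType) (I1 I2 : set R) : set R :=
  epsilon (inhabits set0) (is_smallest (@is_rint R) (I1 `|` I2)).

Definition bplus (R : realType) (n : nat) (B1 B2 : set 'rV[R]_n) : set 'rV[R]_n :=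
  epsilon (inhabits set0) (is_smallest (@is_rbox R n) (B1 `|` B2)).

Definition proj (R : realType) (n : nat) (i : 'I_n) (S : set 'rV[R]_n) : set R :=
  (fun x : 'rV[R]_n => x ord0 i) @` S.

(** The least rational interval above the union [S] of two rational intervals
    is its convex hull: write both intervals with one-sided constraints; a
    point [x] satisfying every such constraint that is valid on all of [S] lies
    between two points of [S].  A non-empty rational box is the product of its
    projections, and the least box above [B1 `|` B2] is the product of the
    hulls of the [proj i B1 `|` proj i B2].  Hence [B1 `|` B2] is its own hull
    iff every [proj i B1 `|` proj i B2] is an interval and the product of these
    unions adds no point to [B1 `|` B2].  A point of the product outside both
    boxes exists exactly when [B1] sticks out of [B2] along some axis [i] and
    [B2] sticks out of [B1] along a different axis [j]. *)
From HB Require Import structures.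
From mathcomp Require Import all_boot all_order all_algebra.
From mathcomp Require Import boolp classical_sets reals lra.
From Stdlib Require Import ClassicalEpsilon.
Set Implicit Arguments. Unset Strict Implicit. Unset Printing Implicit Defensive.
Import Order.TTheory GRing.Theory Num.Theory.
Local Open Scope ring_scope.
Local Open Scope classical_set_scope.

Definition cmp_code (c : cmp) : nat :=
  match c with CLt => 0 | CLe => 1 | CEq => 2 | CGe => 3 | CGt => 4 end.

Definition cmp_decode (k : nat) : option cmp :=
  match k with
  | 0 => Some CLt | 1 => Some CLe | 2 => Some CEq | 3 => Some CGe | 4 => Some CGt
  | _ => None
  end.

Lemma cmp_codeK : pcancel cmp_code cmp_decode. Proof. by case. Qed.

HB.instance Definition _ := Equality.copy cmp (pcan_type cmp_codeK).

Lemma all_flatten (T : Type) (P : pred T) (ss : seq (seq T)) :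
  all P (flatten ss) = all (all P) ss.
Proof. by elim: ss => //= s ss IH; rewrite all_cat IH. Qed.

Lemma smallest_self (T : Type) (P : set T -> Prop) (S : set T) :
  P S -> is_smallest P S S.
Proof. by move=> PS; split. Qed.

Lemma epsilon_smallest_id (T : Type) (P : set T -> Prop) (S : set T) :
  (exists A, is_smallest P S A) ->
  epsilon (inhabits set0) (is_smallest P S) = S <-> P S.
Proof.
move=> ex; have [PA SA minA] := epsilon_spec (inhabits set0) _ ex.
split=> [<-//|PS]; apply/seteqP; split=> //; exact: minA.
Qed.

Section RationalIntervals.
Variable R : realType.
Implicit Types (x y z : R) (S : set R).

Definition csat (c : cmp * rat) x : bool := cmp_sat c.1 x (ratr c.2).
Definition csats (cs : seq (cmp * rat)) x : bool := all (csat^~ x) cs.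

Definition one_sided (c : cmp) : bool := if c is CEq then false else true.
Definition bounds_below (c : cmp) : bool :=
  match c with CGe | CGt => true | _ => false end.

Lemma cmp_sat_convex (c : cmp) (b x y z : R) : y <= x -> x <= z ->
  cmp_sat c y b -> cmp_sat c z b -> cmp_sat c x b.
Proof. by case: c => /=; lra. Qed.

Lemma cmp_sat_separate (c : cmp) (b x y : R) : one_sided c ->
  ~~ cmp_sat c x b -> cmp_sat c y b -> if bounds_below c then x < y else y < x.
Proof. by case: c => //= _; rewrite -?leNgt -?ltNge; lra. Qed.

Lemma rint_convex (I : set R) x y z : is_rint I ->
  I y -> I z -> y <= x -> x <= z -> I x.
Proof.
move=> [cs ->] /allP Iy /allP Iz yx xz; apply/allP => c cin.
exact: cmp_sat_convex yx xz (Iy c cin) (Iz c cin).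
Qed.

Definition split_eq (c : cmp * rat) : seq (cmp * rat) :=
  if c.1 is CEq then [:: (CLe, c.2); (CGe, c.2)] else [:: c].

Lemma rint_one_sided (I : set R) : is_rint I ->
  exists2 cs, all (one_sided \o fst) cs & I = [set x | csats cs x].
Proof.
move=> [cs ->]; exists (flatten (map split_eq cs)).
  by rewrite all_flatten all_map; apply/allP => -[[] b].
have E x : csats (flatten (map split_eq cs)) x = csats cs x.
  rewrite /csats all_flatten all_map; apply: eq_all => -[[] b];
  by rewrite /= /csat /= ?andbT // eq_le.
by apply/seteqP; split => x /=; rewrite E.
Qed.

Definition chull S : set R :=
  [set x | exists y z, [/\ S y, S z, y <= x & x <= z]].

Lemma subset_chull S : S `<=` chull S.
Proof. by move=> x Sx; exists x, x. Qed.

Section HullOfUnion.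
Variables cs1 cs2 : seq (cmp * rat).
Hypotheses (one1 : all (one_sided \o fst) cs1) (one2 : all (one_sided \o fst) cs2).
Let S := [set x | csats cs1 x] `|` [set x | csats cs2 x].

(* If [x] is outside both intervals, it violates some [d1] of [cs1] and some
   [d2] of [cs2].  Neither is valid on [S]: [d1] fails at some [y2] of the
   second interval and [d2] at some [y1] of the first.  As [d1] holds at [y1]
   and [d2] at [y2], the two half-lines open in opposite directions, which puts
   [x] between [y1] and [y2]. *)
Lemma chull_of_valid_constraints x :
  (forall c, c \in cs1 ++ cs2 -> (forall y, S y -> csat c y) -> csat c x) ->
  chull S x.
Proof.
move=> hx.
have [x1|/allPn[d1 d1in d1x]] := boolP (csats cs1 x); first by apply: subset_chull; left.
have [x2|/allPn[d2 d2in d2x]] := boolP (csats cs2 x); first by apply: subset_chull; right.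
have witness d : d \in cs1 ++ cs2 -> ~~ csat d x -> exists2 y, S y & ~~ csat d y.
  move=> din /negP dx; apply: contrapT => none; apply/dx/hx => // y Sy.
  by apply: contrapT => /negP dy; apply: none; exists y.
have [y2 Sy2 d1y2] : exists2 y, S y & ~~ csat d1 y.
  by apply: witness d1x; rewrite mem_cat d1in.
have [y1 Sy1 d2y1] : exists2 y, S y & ~~ csat d2 y.
  by apply: witness d2x; rewrite mem_cat d2in orbT.
have I2y2 : csats cs2 y2.
  by case: Sy2 => // /allP/(_ d1 d1in); rewrite (negbTE d1y2).
have I1y1 : csats cs1 y1.
  by case: Sy1 => // /allP/(_ d2 d2in); rewrite (negbTE d2y1).
have h1 := cmp_sat_separate (allP one1 _ d1in) d1x (allP I1y1 _ d1in).
have h1' := cmp_sat_separate (allP one1 _ d1in) d1y2 (allP I1y1 _ d1in).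
have h2 := cmp_sat_separate (allP one2 _ d2in) d2x (allP I2y2 _ d2in).
have h2' := cmp_sat_separate (allP one2 _ d2in) d2y1 (allP I2y2 _ d2in).
move: h1 h1' h2 h2'; case: bounds_below; case: bounds_below => h1 h1' h2 h2';
  [lra | exists y2, y1 | exists y1, y2 | lra]; split => //; lra.
Qed.

End HullOfUnion.

Lemma rint_hull (I1 I2 : set R) : is_rint I1 -> is_rint I2 ->
  is_smallest (@is_rint R) (I1 `|` I2) (chull (I1 `|` I2)).
Proof.
move=> r1 r2; split; last 2 first.
- exact: subset_chull.
- move=> J rJ sJ x [y [z [Sy Sz yx xz]]].
  exact: rint_convex rJ (sJ _ Sy) (sJ _ Sz) yx xz.
have [cs1 one1 ->] := rint_one_sided r1; have [cs2 one2 ->] := rint_one_sided r2.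
set S := _ `|` _.
exists [seq c <- cs1 ++ cs2 | `[< forall y, S y -> csat c y >]].
apply/seteqP; split => x.
- move=> [y [z [Sy Sz yx xz]]]; apply/allP => c.
  rewrite mem_filter => /andP[/asboolP valid _].
  exact: cmp_sat_convex yx xz (valid _ Sy) (valid _ Sz).
- move=> /allP Cx; apply: chull_of_valid_constraints => // c cin valid.
  by apply: Cx; rewrite mem_filter cin andbT; apply/asboolP.
Qed.

End RationalIntervals.

Lemma all_fibers (T : Type) (I : eqType) (g : T -> I) (P : pred T) (s : seq T) :
  all P s <-> forall i, all (fun c => (g c == i) ==> P c) s.
Proof.
split=> [h i|]; first by apply: sub_all h => c Pc; apply/implyP.
elim: s => //= c s IH h; apply/andP; split.
  by have /andP[/implyP/(_ (eqxx _))] := h (g c).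
by apply: IH => i; have /andP[_ ->] := h i.
Qed.

Section RationalBoxes.
Variables (R : realType) (n : nat).
Implicit Types (B : set 'rV[R]_n) (cs : seq (constr n)).

Definition dim_constrs (i : 'I_n) cs : seq (cmp * rat) :=
  [seq (c_rel c, c_bd c) | c <- cs & c_dim c == i].

Lemma box_ofE cs (x : 'rV[R]_n) :
  box_of cs x <-> forall i, csats (dim_constrs i cs) (x ord0 i).
Proof.
have E i : csats (dim_constrs i cs) (x ord0 i) = all (fun c =>
    (c_dim c == i) ==> cmp_sat (c_rel c) (x ord0 (c_dim c)) (ratr (c_bd c))) cs.
  by rewrite /csats all_map all_filter; apply: eq_all => c /=; case: eqP => // ->.
by rewrite /box_of /= (all_fibers (@c_dim n)); split => h i; rewrite ?E // -E.
Qed.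

Lemma proj_box_of cs (p : 'rV[R]_n) (i : 'I_n) : box_of cs p ->
  proj i (@box_of R n cs) = [set t | csats (dim_constrs i cs) t].
Proof.
move=> /box_ofE hp; apply/seteqP; split; first by move=> t [x /box_ofE hx <-]; apply: hx.
move=> t /= it.
exists (\row_k (if k == i then t else p ord0 k)); last by rewrite mxE eqxx.
by apply/box_ofE => k; rewrite mxE; case: eqP => [->|].
Qed.

Lemma proj_rint B (i : 'I_n) : is_rbox B -> is_rint (proj i B).
Proof.
move=> [cs ->]; have [[p hp]|empty] := pselect (exists p : 'rV[R]_n, box_of cs p).
  by rewrite (proj_box_of i hp); exists (dim_constrs i cs).
exists [:: (CLt, 0%R); (CGt, 0%R)]; apply/seteqP; split => t /=.
  by case=> x hx _; case: empty; exists x.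
by rewrite rmorph0 andbT; lra.
Qed.

Lemma rbox_prod_proj B (p : 'rV[R]_n) : is_rbox B -> B p ->
  B = [set x | forall k, proj k B (x ord0 k)].
Proof.
move=> [cs ->] hp; apply/seteqP; split => [x hx k|x hx]; first by exists x.
by apply/box_ofE => k; move: (hx k); rewrite (proj_box_of k hp).
Qed.

Lemma rbox_prod (J : 'I_n -> set R) : (forall k, is_rint (J k)) ->
  is_rbox [set x : 'rV[R]_n | forall k, J k (x ord0 k)].
Proof.
move=> /choice[f hf].
exists (flatten [seq [seq Constr k c.1 c.2 | c <- f k] | k <- enum 'I_n]).
apply/seteqP; split => x; rewrite /box_of /= all_flatten all_map.
  by move=> h; apply/allP => k _ /=; rewrite all_map; move: (h k); rewrite hf.
by move/allP => h k; rewrite hf; move: (h k (mem_enum _ k)) => /=; rewrite all_map.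
Qed.

End RationalBoxes.

Section UnionOfBoxes.
Variables (R : realType) (n : nat).
Implicit Types (B : set 'rV[R]_n).

Lemma rbox_hull B1 B2 : is_rbox B1 -> is_rbox B2 ->
  exists A, is_smallest (@is_rbox R n) (B1 `|` B2) A.
Proof.
move=> r1 r2.
have [->|/set0P[p1 B1p1]] := eqVneq B1 set0.
  by exists B2; rewrite set0U; apply: smallest_self.
have [->|/set0P[p2 B2p2]] := eqVneq B2 set0.
  by exists B1; rewrite setU0; apply: smallest_self.
pose H k := chull (proj k B1 `|` proj k B2).
have hull k : is_smallest (@is_rint R) (proj k B1 `|` proj k B2) (H k).
  exact: rint_hull (proj_rint k r1) (proj_rint k r2).
exists [set x | forall k, H k (x ord0 k)]; split.
- by apply: rbox_prod => k; have [] := hull k.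
- by move=> x Bx k; apply: subset_chull; case: Bx => h; [left|right]; exists x.
- move=> A rA sA x Hx; rewrite (rbox_prod_proj rA (sA p1 (or_introl B1p1))) /= => k.
  have [_ _ minH] := hull k; apply: minH (Hx k); first exact: proj_rint.
  by rewrite /proj -image_setU; apply: image_subset.
Qed.

Definition crosswise B1 B2 : Prop := exists i j : 'I_n,
  [/\ i <> j, ~ proj i B1 `<=` proj i B2 & ~ proj j B2 `<=` proj j B1].

Lemma rbox_setU_not_crosswise B1 B2 : is_rbox (B1 `|` B2) -> ~ crosswise B1 B2.
Proof.
move=> rU [i [j [ij]]].
move=> /existsNP[_ /not_implyP[[p B1p <-] pB2]] /existsNP[_ /not_implyP[[q B2q <-] qB1]].
pose x : 'rV[R]_n :=
  \row_k (if k == i then p ord0 i else if k == j then q ord0 j else p ord0 k).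
have xi : x ord0 i = p ord0 i by rewrite mxE eqxx.
have xj : x ord0 j = q ord0 j.
  have ji : (j == i) = false by apply/eqP => /esym.
  by rewrite mxE ji eqxx.
have : (B1 `|` B2) x.
  rewrite (rbox_prod_proj rU (or_introl B1p)) /= => k; rewrite mxE.
  case: eqP => [->|_]; first by exists p; [left|].
  case: eqP => [->|_]; first by exists q; [right|].
  by exists p; [left|].
by case=> Bx; [apply: qB1; rewrite -xj | apply: pB2; rewrite -xi]; exists x.
Qed.

Lemma setU_rbox_prod B1 B2 (p1 p2 : 'rV[R]_n) : is_rbox B1 -> is_rbox B2 ->
  B1 p1 -> B2 p2 -> ~ crosswise B1 B2 ->
  B1 `|` B2 = [set x | forall k, (proj k B1 `|` proj k B2) (x ord0 k)].
Proof.
move=> r1 r2 B1p1 B2p2 nocross; apply/seteqP; split=> [x Bx k|x hx].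
  by case: Bx => h; [left|right]; exists x.
apply: contrapT => /not_orP[nB1 nB2].
have [i ni] : exists i, ~ proj i B1 (x ord0 i).
  by apply/existsNP => all1; apply: nB1; rewrite (rbox_prod_proj r1 B1p1).
have [j nj] : exists j, ~ proj j B2 (x ord0 j).
  by apply/existsNP => all2; apply: nB2; rewrite (rbox_prod_proj r2 B2p2).
apply: nocross; exists j, i; split.
- by move=> ji; rewrite ji in nj; case: (hx i) => [/ni|/nj].
- by move=> sub; case: (hx j) => [/sub|] /nj.
- by move=> sub; case: (hx i) => [|/sub] /ni.
Qed.

Lemma is_rbox_setU B1 B2 : is_rbox B1 -> is_rbox B2 ->
  is_rbox (B1 `|` B2) <->
  (forall i, is_rint (proj i B1 `|` proj i B2)) /\ ~ crosswise B1 B2.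
Proof.
move=> r1 r2; split=> [rU|[rint_proj nocross]].
  split; last exact: rbox_setU_not_crosswise.
  by move=> i; rewrite /proj -image_setU; apply: proj_rint.
have [->|/set0P[p1 B1p1]] := eqVneq B1 set0; first by rewrite set0U.
have [->|/set0P[p2 B2p2]] := eqVneq B2 set0; first by rewrite setU0.
rewrite (setU_rbox_prod r1 r2 B1p1 B2p2 nocross).
exact: (rbox_prod (J := fun k => proj k B1 `|` proj k B2) rint_proj).
Qed.

End UnionOfBoxes.

Theorem theorem5 (R : realType) (n : nat) (B1 B2 : set 'rV[R]_n) :
  is_rbox B1 -> is_rbox B2 ->
  (bplus B1 B2 <> B1 `|` B2 <->
   (exists i : 'I_n,
      iplus (proj i B1) (proj i B2) <> proj i B1 `|` proj i B2) \/
   (exists i j : 'I_n,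
      [/\ i <> j, ~ (proj i B1 `<=` proj i B2) & ~ (proj j B2 `<=` proj j B1)])).
Proof.
move=> r1 r2.
have iplusE i : iplus (proj i B1) (proj i B2) = proj i B1 `|` proj i B2 <->
                is_rint (proj i B1 `|` proj i B2).
  apply: epsilon_smallest_id; exists (chull (proj i B1 `|` proj i B2)).
  by apply: rint_hull; apply: proj_rint.
have bplusE : bplus B1 B2 = B1 `|` B2 <->
    (forall i, is_rint (proj i B1 `|` proj i B2)) /\ ~ crosswise B1 B2.
  exact: iff_trans (epsilon_smallest_id (rbox_hull r1 r2)) (is_rbox_setU r1 r2).
split=> [neq|[[i neq]|cross] /bplusE[rint_proj nocross]].
- apply: contrapT => /not_orP[/forallNP noneq nocross]; apply/neq/bplusE.
  by split=> // i; apply/iplusE; apply: contrapT => /(noneq i).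
- by apply: neq; apply/iplusE; apply: rint_proj.
- exact: nocross cross.
Qed.
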